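(* For every graph $G$: (1) if the cutset hypergraph $\mathcal{C}(G)$ is $1$-Sperner, then $G$ is connected-domishold; (2) if $G$ is connected-domishold, then $\mathcal{C}(G)$ is $2$-asummable.
   Context: A connected dominating set (CD set) of a connected graph $G$ is a set $S\subseteq V(G)$ that is dominating (every vertex outside $S$ has a neighbor in $S$) and induces a connected subgraph. A graph $G=(V,E)$ is connected-domishold if there exist $w:V\to\mathbb{R}_{\ge 0}$, $t\in\mathbb{R}_{\ge 0}$ such that for all $S\subseteq V$, $\sum_{x\in S}w(x)\ge t$ iff $S$ is a CD set; disconnected graphs are considered connected-domishold by convention. A cutset is a set $S\subseteq V(G)$ with $G-S$ disconnected; minimal if it contains no other cutset. The cutset hypergraph $\mathcal{C}(G)$ has vertex set $V(G)$ and hyperedges the minimal cutsets. A hypergraph is $1$-Sperner if for every two distinct hyperedges $e,f$, $\min\{|e\setminus f|,|f\setminus e|\}=1$. A hypergraph $\mathcal{H}=(V,E)$ is $2$-summable if there exist subsets $A_1,A_2\subseteq V$, each containing a hyperedge, and $B_1,B_2\subseteq V$, each containing no hyperedge, such that for every $v\in V$, $|\{i:v\in A_i\}|=|\{i:v\in B_i\}|$; it is $2$-asummable otherwise. *)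

From HB Require Import structures.
From Stdlib Require Import Reals.
From mathcomp Require Import all_boot.
Set Implicit Arguments. Unset Strict Implicit. Unset Printing Implicit Defensive.

Definition simple_graph (V : finType) (e : rel V) : Prop :=
  symmetric e /\ irreflexive e.

Definition induced_rel (V : finType) (e : rel V) (S : {set V}) : rel V :=
  [rel x y | [&& e x y, x \in S & y \in S]].

Definition connected_set (V : finType) (e : rel V) (S : {set V}) : bool :=
  [forall x in S, forall y in S, connect (induced_rel e S) x y].

Definition graph_connected (V : finType) (e : rel V) : Prop :=
  connected_set e [set: V].

Definition dominating (V : finType) (e : rel V) (S : {set V}) : Prop :=
  forall x, x \notin S -> exists2 y, y \in S & e x y.

Definition CD_set (V : finType) (e : rel V) (S : {set V}) : Prop :=
  dominating e S /\ connected_set e S.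

Definition weight (V : finType) (w : V -> R) (S : {set V}) : R :=
  \big[Rplus/R0]_(x in S) w x.

Definition connected_domishold (V : finType) (e : rel V) : Prop :=
  ~ graph_connected e \/
  exists (w : V -> R) (t : R),
    (forall x, Rle R0 (w x)) /\ Rle R0 t /\
    forall S : {set V}, Rle t (weight w S) <-> CD_set e S.

Definition cutset (V : finType) (e : rel V) (S : {set V}) : bool :=
  ~~ connected_set e (~: S).

Definition minimal_cutset (V : finType) (e : rel V) (S : {set V}) : bool :=
  cutset e S && [forall T : {set V}, (T \proper S) ==> ~~ cutset e T].

Definition hypergraph (V : finType) := {set {set V}}.

Definition cutset_hypergraph (V : finType) (e : rel V) : hypergraph V :=
  [set S : {set V} | minimal_cutset e S ].

Definition one_Sperner (V : finType) (H : hypergraph V) : Prop :=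
  forall E F, E \in H -> F \in H -> E != F ->
    minn #|E :\: F| #|F :\: E| = 1.

Definition contains_hyperedge (V : finType) (H : hypergraph V) (A : {set V}) : Prop :=
  exists2 E, E \in H & E \subset A.

Definition two_summable (V : finType) (H : hypergraph V) : Prop :=
  exists A1 A2 B1 B2 : {set V},
    contains_hyperedge H A1 /\ contains_hyperedge H A2 /\
    ~ contains_hyperedge H B1 /\ ~ contains_hyperedge H B2 /\
    forall v, (v \in A1) + (v \in A2) = (v \in B1) + (v \in B2).

Definition two_asummable (V : finType) (H : hypergraph V) : Prop :=
  ~ two_summable H.

From Stdlib Require Import Reals Lia Lra.
From HB Require Import structures.
From mathcomp Require Import all_boot zify.
Set Implicit Arguments. Unset Strict Implicit. Unset Printing Implicit Defensive.

(* (1) A 1-Sperner hypergraph is threshold. Say that u dominates v if replacing v by u in a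
   set never destroys the presence of an edge; in a 1-Sperner hypergraph this preorder is
   total, so some vertex z dominates all others. Every edge avoiding z then contains the
   support of the link of z, so a set contains an edge iff it contains z and an edge of the
   link, or the support of the link and an edge of the edges avoiding z with that support
   removed. Both parts are 1-Sperner on fewer vertices; their threshold weights, obtained by
   induction, glue lexicographically. A nonempty set is a CD set iff its complement contains
   no cutset, so passing to complements turns threshold weights of C(G) into weights that
   separate CD sets from the other sets.
   (2) If (w, t) witnesses connected-domishold and A1, A2, B1, B2 witness 2-summability, the
   complements of A1 and A2 are not CD sets and those of B1 and B2 are, so the first pair
   weighs less than 2t and the second at least 2t; yet both pairs have the same total
   weight. *)

Section Hypergraphs.
Variable V : finType.
Implicit Types (H : hypergraph V) (A E F G X Y U : {set V}) (u v x z : V) (w : V -> nat).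

Definition has_edge H X : bool := [exists E in H, E \subset X].

Lemma has_edgeP H X : reflect (contains_hyperedge H X) (has_edge H X).
Proof. by apply: (iffP exists_inP) => -[E HE sEX]; exists E. Qed.

Lemma has_edgeS H X Y : X \subset Y -> has_edge H X -> has_edge H Y.
Proof.
move=> sXY /exists_inP[E HE sEX]; apply/exists_inP; exists E => //.
exact: subset_trans sXY.
Qed.

Lemma has_edgeU H1 H2 X : has_edge (H1 :|: H2) X = has_edge H1 X || has_edge H2 X.
Proof.
apply/exists_inP/orP => [[E] | [] /exists_inP[E HE sEX]].
- by rewrite inE => /orP[] HE sEX; [left | right]; apply/exists_inP; exists E.
- by exists E; rewrite // inE HE.
- by exists E; rewrite // inE HE orbT.
Qed.

Lemma has_edge_setIr H A X :
  (forall E, E \in H -> E \subset A) -> has_edge H (X :&: A) = has_edge H X.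
Proof.
move=> subA; apply/idP/idP; first exact/has_edgeS/subsetIl.
by case/exists_inP=> E HE sEX; apply/exists_inP; exists E; rewrite // subsetI sEX subA.
Qed.

Lemma has_edge_imsetD H A X : (forall E, E \in H -> A \subset E) ->
  has_edge H X = (A \subset X) && has_edge [set E :\: A | E in H] X.
Proof.
move=> sAE; apply/exists_inP/andP => [[E HE sEX] | [sAX /exists_inP[_ /imsetP[E HE ->] sEX]]].
  split; first exact: subset_trans (sAE E HE) sEX.
  by apply/exists_inP; exists (E :\: A); [apply: imset_f | apply: subset_trans sEX; apply: subsetDl].
exists E => //; rewrite -(setID E A) subUset sEX andbT.
exact: subset_trans (subsetIr _ _) sAX.
Qed.

Definition wsum w X := \sum_(x in X) w x.

Lemma leq_wsum w X Y : X \subset Y -> wsum w X <= wsum w Y.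
Proof.
by move=> sXY; rewrite /wsum [X in _ <= X](big_setID X) (setIidPr sXY) leq_addr.
Qed.

Lemma ltn_wsum w X Y v : X \subset Y -> v \in Y :\: X -> 0 < w v -> wsum w X < wsum w Y.
Proof.
move=> sXY vYX wv; rewrite /wsum [X in _ < X](big_setID X) (setIidPr sXY).
by rewrite -ltn_subLR ?subnn // (big_setD1 v) //= ltn_addr.
Qed.

Lemma wsumC w X : wsum w X + wsum w (~: X) = wsum w setT.
Proof. by rewrite /wsum [RHS](big_setID X) setTI setTD. Qed.

Definition threshold_weight H U w :=
  (forall x, x \in U -> 0 < w x) /\
  forall X Y, X \subset U -> Y \subset U ->
    has_edge H X -> ~~ has_edge H Y -> wsum w Y < wsum w X.

Lemma threshold_weight_trivial H U :
  (forall E, E \in H -> E = set0) -> threshold_weight H U (fun=> 1).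
Proof.
move=> H0; split=> // X Y _ _ /exists_inP[E HE _] /exists_inP[]; exists E => //.
by rewrite (H0 E HE) sub0set.
Qed.

Lemma one_Sperner_sub_eq H E F : one_Sperner H -> E \in H -> F \in H -> E \subset F -> E = F.
Proof.
move=> h1 HE HF sEF; apply/eqP; apply: contraT => nEF.
have := h1 E F HE HF nEF.
have /eqP -> : E :\: F == set0 by rewrite setD_eq0.
by rewrite cards0 min0n.
Qed.

Lemma setD1_sub_of_card1 E F v : #|E :\: F| = 1 -> v \in E :\: F -> E :\ v \subset F.
Proof.
move=> /eqP/cards1P[x defEF]; rewrite defEF inE => /eqP->.
apply/subsetP => y; rewrite !inE => /andP[yx yE]; apply: contraNT yx => yF.
have : y \in E :\: F by rewrite inE yF yE.
by rewrite defEF inE.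
Qed.

Lemma one_Sperner_exchange H E F u v : one_Sperner H -> E \in H -> F \in H ->
  v \in E :\: F -> u \in F :\: E -> (E :\ v \subset F) || (F :\ u \subset E).
Proof.
move=> h1 HE HF vEF uFE.
have nEF : E != F by apply: contraTneq vEF => ->; rewrite setDv inE.
have := h1 E F HE HF nEF; rewrite /minn; case: ifP => _ card1.
- by rewrite (setD1_sub_of_card1 card1 vEF).
- by rewrite (setD1_sub_of_card1 card1 uFE) orbT.
Qed.

Lemma one_Sperner_subset H H' : H' \subset H -> one_Sperner H -> one_Sperner H'.
Proof. by move=> sH h1 E F HE HF; apply: h1; apply: (subsetP sH). Qed.

Lemma one_Sperner_imsetD H A :
  (forall E, E \in H -> A \subset E) -> one_Sperner H -> one_Sperner [set E :\: A | E in H].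
Proof.
move=> sAE h1 _ _ /imsetP[E HE ->] /imsetP[F HF ->] nEF.
have setDD G1 G2 : A \subset G2 -> (G1 :\: A) :\: (G2 :\: A) = G1 :\: G2.
  move=> sAG2; apply/setP => x; rewrite !inE.
  by case: (boolP (x \in A)) => [/(subsetP sAG2)->|]; rewrite ?andbF.
rewrite !setDD ?sAE //; apply: h1 => //.
by apply: contraNneq nEF => ->.
Qed.

Definition dominates H u v : bool :=
  [forall X : {set V},
    [&& u \notin X, v \notin X & has_edge H (v |: X)] ==> has_edge H (u |: X)].

Lemma dominatesP H u v :
  reflect (forall X, u \notin X -> v \notin X -> has_edge H (v |: X) -> has_edge H (u |: X))
          (dominates H u v).
Proof.
apply: (iffP forallP) => [h X uX vX hvX | h X]; last by apply/implyP => /and3P[]; apply: h.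
by apply: (implyP (h X)); rewrite uX vX.
Qed.

Lemma dominates_refl H u : dominates H u u.
Proof. by apply/dominatesP. Qed.

Lemma dominates_trans H u v x : dominates H u v -> dominates H v x -> dominates H u x.
Proof.
move=> /dominatesP huv /dominatesP hvx; apply/dominatesP => X uX xX hxX.
have [-> // | ux] := eqVneq u x.
have [vX | vX] := boolP (v \in X); last exact/huv/hvx.
have vx : v != x by apply: contraNneq xX => <-.
have uv : u != v by apply: contraNneq uX => ->.
have defX : v |: (X :\ v) = X by rewrite setD1K.
have hu : has_edge H (u |: (x |: (X :\ v))).
  apply: huv; last by rewrite setUCA defX.
    by rewrite !inE negb_or ux negb_and uX orbT.
  by rewrite !inE negb_or vx eqxx.
rewrite -defX setUCA; apply: hvx; last by rewrite setUCA.
  by rewrite !inE negb_or eq_sym uv eqxx.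
by rewrite !inE negb_or eq_sym ux negb_and xX orbT.
Qed.

Lemma not_dominates_edge H u v : ~~ dominates H u v ->
  exists2 E, E \in H & [&& v \in E, u \notin E & ~~ has_edge H (u |: (E :\ v))].
Proof.
case/forallPn=> X; rewrite negb_imply => /andP[/and3P[uX vX /exists_inP[E HE sEX]] nuX].
have uv : u != v by apply: contraNneq nuX => ->; apply/exists_inP; exists E.
have vE : v \in E.
  apply: contraNT nuX => vE; apply/exists_inP; exists E => //.
  have : E \subset (v |: X) :\ v by rewrite subsetD1 sEX vE.
  by rewrite setU1K // => /subset_trans; apply; apply: subsetU1.
exists E => //; rewrite vE /=; apply/andP; split.
  by apply: contraNN uX => /(subsetP sEX); rewrite !inE (negbTE uv).
apply: contraNN nuX; apply: has_edgeS; apply: setUS.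
by rewrite subDset.
Qed.

Lemma dominates_total H u v : one_Sperner H -> dominates H u v || dominates H v u.
Proof.
move=> h1; apply: contraT; rewrite negb_or => /andP[/not_dominates_edge[E HE] /and3P[vE uE nuE]].
case/not_dominates_edge=> F HF /and3P[uF vF nvF].
have swap (A B : {set V}) a b : b \notin A -> A :\ a \subset B -> A \subset a |: (B :\ b).
  move=> bA sAB; rewrite -subDset subsetD1 sAB /=.
  by apply: contraNN bA => /setD1P[].
have vEF : v \in E :\: F by rewrite inE vE vF.
have uFE : u \in F :\: E by rewrite inE uF uE.
case/orP: (one_Sperner_exchange h1 HE HF vEF uFE) => sub.
- by case/negP: nvF; apply/exists_inP; exists E; last exact: swap.
- by case/negP: nuE; apply/exists_inP; exists F; last exact: swap.
Qed.

Lemma exists_dominating H U u0 : one_Sperner H -> u0 \in U ->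
  exists2 z, z \in U & forall v, v \in U -> dominates H z v.
Proof.
move=> h1 u0U; pose below u := [set v in U | dominates H u v].
case: (@arg_maxnP _ u0 (mem U) (fun u => #|below u|) u0U) => z zU zmax.
exists z => // v vU; apply: contraT => nzv.
have vz : dominates H v z by move: (dominates_total z v h1); rewrite (negbTE nzv).
have : below z \proper below v.
  apply/properP; split; last by exists v; rewrite !inE ?vU ?dominates_refl.
  by apply/subsetP => x; rewrite !inE => /andP[-> /(dominates_trans vz)].
have zv : #|below v| <= #|below z| := zmax v vU.
by move/proper_card; rewrite ltnNge zv.
Qed.

Section TopVertex.
Variables (H : hypergraph V) (U : {set V}) (z : V).
Hypotheses (h1 : one_Sperner H) (subU : forall E, E \in H -> E \subset U).
Hypothesis ztop : forall v, v \in U -> dominates H z v.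

Lemma top_in_edge E : E \in H -> E != set0 -> exists2 G, G \in H & z \in G.
Proof.
move=> HE /set0Pn[v vE]; have [zE | zE] := boolP (z \in E); first by exists E.
have /exists_inP[G HG sG] : has_edge H (z |: (E :\ v)).
  apply: (dominatesP _ _ _ (ztop (subsetP (subU HE) v vE))).
  - by rewrite !inE negb_and zE orbT.
  - by rewrite !inE eqxx.
  - by rewrite setD1K //; apply/exists_inP; exists E.
exists G => //; apply: contraT => zG.
have sGE : G \subset E :\ v.
  have zEv : z \notin E :\ v by rewrite !inE negb_and zE orbT.
  by rewrite -(setU1K zEv) subsetD1 sG.
have GE : G = E by apply: one_Sperner_sub_eq h1 HG HE (subset_trans sGE (subD1set E v)).
by move: sGE; rewrite GE subsetD1 vE andbF.
Qed.

Lemma top_edge_setD1 E F : E \in H -> F \in H -> z \in E -> z \notin F -> E :\ z \subset F.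
Proof.
move=> HE HF zE zF.
have /subsetPn[y yF yE] : ~~ (F \subset E).
  by apply: contraNN zF => /(one_Sperner_sub_eq h1 HF HE) ->.
have zEF : z \in E :\: F by rewrite inE zE zF.
have yFE : y \in F :\: E by rewrite inE yF yE.
case/orP: (one_Sperner_exchange h1 HE HF zEF yFE) => // sFE.
have /exists_inP[G HG sG] : has_edge H (z |: (F :\ y)).
  apply: (dominatesP _ _ _ (ztop (subsetP (subU HF) y yF))).
  - by rewrite !inE negb_and zF orbT.
  - by rewrite !inE eqxx.
  - by rewrite setD1K //; apply/exists_inP; exists F.
have GE : G = E by apply: (one_Sperner_sub_eq h1 HG HE); rewrite (subset_trans sG) // subUset sub1set zE.
by move: sG; rewrite GE -subDset => /subset_trans; apply; apply: subD1set.
Qed.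

End TopVertex.

Section Composition.
Variables (H H1 H2 : hypergraph V) (V1 V2 : {set V}) (z : V) (w1 w2 : V -> nat) (E0 : {set V}).
Hypotheses (zV1 : z \notin V1) (zV2 : z \notin V2) (V12 : [disjoint V1 & V2]).
Hypotheses (sub1 : forall E, E \in H1 -> E \subset V1) (sub2 : forall E, E \in H2 -> E \subset V2).
Hypotheses (thr1 : threshold_weight H1 V1 w1) (thr2 : threshold_weight H2 V2 w2).
Hypothesis H1E0 : E0 \in H1.
Hypothesis has_edge_split :
  forall X, has_edge H X = (z \in X) && has_edge H1 X || (V1 \subset X) && has_edge H2 X.

Let U := z |: (V1 :|: V2).
Let p X := wsum w1 (X :&: V1).
Let q X := wsum w2 (X :&: V2).
Let m1 := wsum w1 [arg min_(E < E0 in H1) wsum w1 E].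
Let W1 := wsum w1 V1.
Let S2 := wsum w2 V2.
(* [a] makes [w1] dominate [w2], and [b] is chosen so that [z] with an edge of [H1] outweighs
   all of [V1] with anything of [V2], while [z] without an edge of [H1] weighs less than
   [V1] alone. *)
Let a := S2.*2.+2.
Let b := a * W1 - a * m1 + S2.+1.
Let glue x := if x \in V1 then a * w1 x else if x == z then b else w2 x.

Lemma m1_le_p X : has_edge H1 X -> m1 <= p X.
Proof.
case/exists_inP=> E HE sEX; rewrite /m1; case: arg_minnP => // E1 _ E1min.
by apply: leq_trans (E1min E HE) _; apply: leq_wsum; rewrite subsetI sEX sub1.
Qed.

Lemma p_lt_m1 X : ~~ has_edge H1 X -> p X < m1.
Proof.
move=> nX; rewrite /m1; case: arg_minnP => // E1 HE1 _.
apply: thr1.2; rewrite ?subsetIr ?sub1 ?has_edge_setIr //.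
by apply/exists_inP; exists E1.
Qed.

Lemma m1_le_W1 : m1 <= W1.
Proof. by rewrite /m1; case: arg_minnP => // E1 HE1 _; apply/leq_wsum/sub1. Qed.

Lemma wsum_glue X : X \subset U -> wsum glue X = a * p X + b * (z \in X) + q X.
Proof.
move=> sXU; rewrite /wsum (big_setID V1) /= [\sum_(x in X :\: V1) _](big_setID [set z]) /= addnA.
congr (_ + _ + _).
- rewrite /p /wsum big_distrr; apply: eq_bigr => x; rewrite inE => /andP[_ xV1].
  by rewrite /glue xV1.
- have [zX | zX] := boolP (z \in X).
    have -> : (X :\: V1) :&: [set z] = [set z] by apply/setIidPr; rewrite sub1set !inE zX zV1.
    by rewrite big_set1 /glue (negbTE zV1) eqxx muln1.
  have -> : (X :\: V1) :&: [set z] = set0.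
    by apply/setP => x; rewrite !inE; case: (eqVneq x z) => [->|]; rewrite ?(negbTE zX) ?andbF.
  by rewrite big_set0 muln0.
- have -> : (X :\: V1) :\: [set z] = X :&: V2.
    apply/setP => x; rewrite !inE; have [xX | xX] := boolP (x \in X); last by rewrite !andbF.
    have := subsetP sXU x xX; rewrite !inE andbT.
    have [-> | xz] := eqVneq x z; first by rewrite (negbTE zV2).
    have [xV2 | xV2] := boolP (x \in V2); first by rewrite (disjointFl V12 xV2).
    by rewrite /= orbF => ->.
  apply: eq_bigr => x; rewrite inE => /andP[_ xV2].
  rewrite /glue (disjointFl V12 xV2); case: eqP => // xz.
  by move: zV2; rewrite -xz xV2.
Qed.

Lemma q_le_S2 X : q X <= S2.
Proof. exact/leq_wsum/subsetIr. Qed.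

Lemma glue_z_edge X : X \subset U -> z \in X -> has_edge H1 X -> a * W1 + S2 < wsum glue X.
Proof.
move=> sXU zX hX; rewrite wsum_glue // zX muln1 /b.
have : a * m1 <= a * p X by rewrite leq_mul2l m1_le_p ?orbT.
have : a * m1 <= a * W1 by rewrite leq_mul2l m1_le_W1 orbT.
lia.
Qed.

Lemma glue_V1 X : X \subset U -> V1 \subset X -> wsum glue X = a * W1 + b * (z \in X) + q X.
Proof. by move=> sXU sV1X; rewrite wsum_glue // /p (setIidPr sV1X). Qed.

Lemma glue_edge_lower X : X \subset U -> has_edge H X -> a * W1 <= wsum glue X.
Proof.
move=> sXU; rewrite has_edge_split => /orP[/andP[zX hX] | /andP[sV1X _]].
  by apply: leq_trans (ltnW (glue_z_edge sXU zX hX)); apply: leq_addr.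
by rewrite glue_V1 // -addnA leq_addr.
Qed.

Lemma glue_small Y : Y \subset U -> ~~ has_edge H Y ->
  ~~ ((z \notin Y) && (V1 \subset Y)) -> wsum glue Y < a * W1.
Proof.
move=> sYU; rewrite has_edge_split negb_or => /andP[nY1 _] hY.
have qY := q_le_S2 Y; rewrite wsum_glue //.
have [zY | zY] := boolP (z \in Y); rewrite ?zY /= in nY1 hY.
  have : a * (p Y).+1 <= a * m1 by rewrite leq_mul2l p_lt_m1 ?orbT.
  have : a * m1 <= a * W1 by rewrite leq_mul2l m1_le_W1 orbT.
  rewrite mulnS /b; lia.
have /subsetPn[v vV1 vY] := hY.
have : a * (p Y).+1 <= a * W1.
  rewrite leq_mul2l; apply/orP; right; apply: (ltn_wsum (subsetIr Y V1) _ (thr1.1 v vV1)).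
  by rewrite !inE vV1 (negbTE vY).
rewrite mulnS muln0; lia.
Qed.

Lemma glue_threshold : threshold_weight H U glue.
Proof.
split=> [x | X Y sXU sYU hX nY].
  rewrite /glue !inE; case: ifP => [xV1 _ | _]; first by rewrite muln_gt0 thr1.1.
  by case: eqP => [_ | _ /= xV2]; [rewrite /b addnS | apply: thr2.1].
have [/andP[zY sV1Y] | small] := boolP ((z \notin Y) && (V1 \subset Y)); last first.
  exact: leq_trans (glue_small sYU nY small) (glue_edge_lower sXU hX).
have nY2 : ~~ has_edge H2 Y by move: nY; rewrite has_edge_split (negbTE zY) sV1Y.
rewrite glue_V1 // (negbTE zY) muln0 addn0.
move: hX; rewrite has_edge_split => /orP[/andP[zX hX] | /andP[sV1X hX]].
  by apply: leq_ltn_trans (glue_z_edge sXU zX hX); rewrite leq_add2l q_le_S2.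
have : q Y < q X by apply: thr2.2; rewrite ?subsetIr ?has_edge_setIr.
rewrite glue_V1 //; lia.
Qed.

Lemma threshold_compose : exists w, threshold_weight H (z |: (V1 :|: V2)) w.
Proof. by exists glue; apply: glue_threshold. Qed.

End Composition.

Definition link H z : hypergraph V := [set E :\ z | E in H & z \in E].
Definition deletion H z : hypergraph V := [set E in H | z \notin E].
Definition hsupport H : {set V} := \bigcup_(E in H) E.

Section TopDecomposition.
Variables (H : hypergraph V) (U : {set V}) (z : V).
Hypotheses (h1 : one_Sperner H) (subU : forall E, E \in H -> E \subset U) (zU : z \in U).
Hypothesis ztop : forall v, v \in U -> dominates H z v.

Let V1 := hsupport (link H z).
Let H2 := [set F :\: V1 | F in deletion H z].
Let V2 := U :\: (z |: V1).

Lemma z_notin_support_link : z \notin V1.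
Proof. by apply/bigcupP => -[_ /imsetP[E _ ->]]; rewrite !inE eqxx. Qed.

Lemma support_link_sub E : E \in link H z -> E \subset V1.
Proof. exact: bigcup_sup. Qed.

Lemma support_link_sub_deletion F : F \in deletion H z -> V1 \subset F.
Proof.
rewrite inE => /andP[HF zF]; apply/bigcupsP => E' /imsetP[E]; rewrite inE => /andP[HE zE] ->.
exact: (top_edge_setD1 h1 subU ztop HE HF zE zF).
Qed.

Lemma support_link_subU : V1 \subset U.
Proof.
apply/bigcupsP => E' /imsetP[E]; rewrite inE => /andP[HE _] ->.
exact: subset_trans (subD1set E z) (subU HE).
Qed.

Lemma deletion_part_sub F : F \in H2 -> F \subset V2.
Proof.
case/imsetP=> F'; rewrite inE => /andP[HF zF] ->; apply/subsetP => x; rewrite !inE.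
case/andP=> xV1 xF; rewrite negb_or (negbTE xV1) (subsetP (subU HF)) // !andbT.
by apply: contraNneq zF => <-.
Qed.

Lemma has_edge_top_split X :
  has_edge H X = (z \in X) && has_edge (link H z) X || (V1 \subset X) && has_edge H2 X.
Proof.
have -> : has_edge H X = has_edge [set E in H | z \in E] X || has_edge (deletion H z) X.
  by rewrite -has_edgeU; congr has_edge; apply/setP => E; rewrite !inE -andb_orr orbN andbT.
rewrite (@has_edge_imsetD [set E in H | z \in E] [set z]) ?sub1set; last first.
  by move=> E; rewrite inE sub1set => /andP[].
by rewrite (@has_edge_imsetD (deletion H z) V1) // => F; apply: support_link_sub_deletion.
Qed.

Lemma one_Sperner_link : one_Sperner (link H z).
Proof.
apply: one_Sperner_imsetD; first by move=> E; rewrite inE sub1set => /andP[].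
by apply: one_Sperner_subset h1; apply/subsetP => E; rewrite inE => /andP[].
Qed.

Lemma one_Sperner_deletion_part : one_Sperner H2.
Proof.
apply: one_Sperner_imsetD; first exact: support_link_sub_deletion.
by apply: one_Sperner_subset h1; apply/subsetP => E; rewrite inE => /andP[].
Qed.

Lemma z_notin_deletion_part : z \notin V2.
Proof. by rewrite !inE eqxx. Qed.

Lemma disjoint_support_link_deletion_part : [disjoint V1 & V2].
Proof. by rewrite disjoints_subset; apply/subsetP => x xV1; rewrite !inE xV1 orbT. Qed.

Lemma card_support_link_lt : #|V1| < #|U|.
Proof.
apply/proper_card/properP; split; first exact: support_link_subU.
by exists z; last exact: z_notin_support_link.
Qed.

Lemma card_deletion_part_lt : #|V2| < #|U|.
Proof.
apply/proper_card/properP; split; first exact: subsetDl.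
by exists z; rewrite // !inE eqxx.
Qed.

Lemma top_partition : U = z |: (V1 :|: V2).
Proof.
have sU : z |: V1 \subset U by rewrite subUset sub1set zU support_link_subU.
by rewrite setUA -{1}(setID U (z |: V1)) (setIidPr sU).
Qed.

End TopDecomposition.

Theorem one_Sperner_threshold H U : one_Sperner H -> (forall E, E \in H -> E \subset U) ->
  exists w, threshold_weight H U w.
Proof.
have [n] := ubnP #|U|; elim: n H U => // n IHn H U /ltnSE leUn h1 subU.
have [/exists_inP[E0 HE0 nE0] | /exists_inPn H0] := boolP [exists E in H, E != set0]; last first.
  by exists (fun=> 1); apply: threshold_weight_trivial => E /H0; rewrite negbK => /eqP.
have [u0 u0E0] := set0Pn _ nE0.
have [z zU ztop] := exists_dominating h1 (subsetP (subU E0 HE0) u0 u0E0).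
have [G0 HG0 zG0] := top_in_edge h1 subU ztop HE0 nE0.
have [w1 thr1] := IHn _ _ (leq_trans (card_support_link_lt subU zU) leUn)
  (one_Sperner_link h1) (@support_link_sub H z).
have [w2 thr2] := IHn _ _ (leq_trans (card_deletion_part_lt H zU) leUn)
  (one_Sperner_deletion_part h1 subU ztop) (deletion_part_sub subU).
have HG0z : G0 :\ z \in link H z by apply/imsetP; exists G0; rewrite // inE HG0.
rewrite (top_partition subU zU).
exact: threshold_compose (z_notin_support_link H z) (z_notin_deletion_part H U z)
  (disjoint_support_link_deletion_part H U z) (@support_link_sub H z) (deletion_part_sub subU)
  thr1 thr2 HG0z (has_edge_top_split h1 subU ztop).
Qed.

End Hypergraphs.

Section CutsetHypergraph.
Variables (V : finType) (e : rel V).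
Implicit Types (S T C X : {set V}).

Lemma minimal_cutsetE S : minimal_cutset e S = minset (cutset e) S.
Proof.
apply/andP/minsetP => -[cS mS]; split=> //.
  move=> T cT sTS; apply/eqP; apply: contraT => nTS.
  by have := implyP (forallP mS T); rewrite properEneq nTS sTS cT => /(_ isT).
apply/forallP => T; apply/implyP; rewrite properEneq => /andP[nTS sTS].
by apply: contra nTS => cT; rewrite (mS T cT sTS).
Qed.

Lemma has_edge_cutsetP X :
  reflect (exists2 C, cutset e C & C \subset X) (has_edge (cutset_hypergraph e) X).
Proof.
apply: (iffP exists_inP) => [[E] | [C cC sCX]]; first by rewrite inE => /andP[cE _]; exists E.
have [E mE sEC] := minset_exists cC.
by exists E; [rewrite inE minimal_cutsetE | exact: subset_trans sCX].
Qed.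

Lemma set0_in_cutset_hypergraph : ~ graph_connected e -> set0 \in cutset_hypergraph e.
Proof.
move=> nconn; rewrite inE minimal_cutsetE; apply/minsetP; split=> [|T _].
  by rewrite /cutset setC0; apply/negP.
by rewrite subset0 => /eqP.
Qed.

Lemma connect_induced_sub S T x y :
  S \subset T -> connect (induced_rel e S) x y -> connect (induced_rel e T) x y.
Proof.
move=> sST; apply: connect_sub => u v /and3P[euv uS vS]; apply: connect1.
by rewrite /induced_rel /= euv !(subsetP sST).
Qed.

Lemma connect_isolated (r : rel V) x y : connect r x y -> (forall y, ~~ r x y) -> y = x.
Proof.
by move=> /connectP[[| y1 p] //= /andP[rxy1 _] _] /(_ y1); rewrite rxy1.
Qed.

Lemma dominatingP S :
  reflect (dominating e S) [forall x, (x \notin S) ==> [exists y in S, e x y]].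
Proof.
apply: (iffP forallP) => [dS x xS | dS x]; first exact/exists_inP/(implyP (dS x) xS).
by apply/implyP => /dS[y yS exy]; apply/exists_inP; exists y.
Qed.

Hypothesis esym : symmetric e.

Lemma connected_set_CD_superset S T : CD_set e S -> S \subset T -> connected_set e T.
Proof.
move=> [domS conS] sST; pose r := induced_rel e T.
have rsym : connect_sym r.
  by apply: sym_connect_sym => x y; rewrite /r /induced_rel /= esym (andbC (x \in T)).
have toS x : x \in T -> exists2 s, s \in S & connect r x s.
  move=> xT; have [xS | /domS[y yS exy]] := boolP (x \in S); first by exists x.
  by exists y => //; apply: connect1; rewrite /r /induced_rel /= exy xT (subsetP sST).
apply/forall_inP => x xT; apply/forall_inP => y yT.
have [s sS xs] := toS x xT; have [s' s'S ys'] := toS y yT.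
apply: connect_trans xs _; rewrite rsym; apply: connect_trans ys' _.
exact: connect_induced_sub sST (forall_inP (forall_inP conS s' s'S) s sS).
Qed.

Lemma CD_set_no_edge_compl S : CD_set e S -> ~~ has_edge (cutset_hypergraph e) (~: S).
Proof.
move=> cdS; apply/has_edge_cutsetP => -[C /negP cC sCS]; apply: cC.
by apply: connected_set_CD_superset cdS _; rewrite subsetC.
Qed.

Hypothesis eirr : irreflexive e.

Lemma CD_set_of_no_edge_compl S :
  S != set0 -> ~~ has_edge (cutset_hypergraph e) (~: S) -> CD_set e S.
Proof.
move=> /set0Pn[s sS] nS.
have conS : connected_set e S.
  by apply: contraNT nS => nconS; apply/has_edge_cutsetP; exists (~: S); rewrite /cutset ?setCK.
split=> //; apply/dominatingP/forallP => x; apply/implyP => xS.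
apply: contraNT nS => /exists_inPn nx; apply/has_edge_cutsetP; exists [set y | e x y]; last first.
  by apply/subsetP => y; rewrite !inE => exy; apply/negP => /nx; rewrite exy.
have xN : x \in ~: [set y | e x y] by rewrite !inE eirr.
have sN : s \in ~: [set y | e x y] by rewrite !inE nx.
apply/negP => /forall_inP/(_ x xN)/forall_inP/(_ s sN)/connect_isolated sx.
suff sx' : s = x by move: xS; rewrite -sx' sS.
by apply: sx => y; rewrite /induced_rel /= !inE; case: (e x y); rewrite ?andbF.
Qed.

End CutsetHypergraph.

HB.instance Definition _ :=
  Monoid.isComLaw.Build R R0 Rplus (fun x y z => esym (Rplus_assoc x y z)) Rplus_comm Rplus_0_l.

Lemma weight_natE (V : finType) (w : V -> nat) S :
  weight (fun x => INR (w x)) S = INR (wsum w S).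
Proof. by apply: esym; apply: (big_morph INR) => // x y; rewrite plus_INR. Qed.

Lemma weight_count2 (V : finType) (w : V -> R) (A1 A2 B1 B2 : {set V}) :
  (forall v, (v \in A1) + (v \in A2) = (v \in B1) + (v \in B2)) ->
  Rplus (weight w A1) (weight w A2) = Rplus (weight w B1) (weight w B2).
Proof.
have sum2 S1 S2 : Rplus (weight w S1) (weight w S2) =
    \big[Rplus/R0]_x Rmult (w x) (INR ((x \in S1) + (x \in S2))).
  rewrite /weight (big_mkcond (fun x => x \in S1)) (big_mkcond (fun x => x \in S2)) -big_split.
  by apply: eq_bigr => x _; case: (x \in S1); case: (x \in S2); rewrite /=; lra.
by move=> count; rewrite !sum2; apply: eq_bigr => x _; rewrite count.
Qed.

Section Domishold.
Variables (V : finType) (e : rel V).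
Hypotheses (esym : symmetric e) (eirr : irreflexive e).

Lemma CD_set_wsum_lt w S S' : threshold_weight (cutset_hypergraph e) setT w ->
  CD_set e S -> ~ CD_set e S' -> wsum w S' < wsum w S.
Proof.
move=> [wpos thr] cdS ncdS'.
have [S'0 | nS'] := eqVneq S' set0.
  have /set0Pn[s sS] : S != set0 by apply/eqP => S0; apply: ncdS'; rewrite S'0 -S0.
  by rewrite S'0; apply: (ltn_wsum (sub0set S) _ (wpos s (in_setT s))); rewrite !inE sS.
have hS' : has_edge (cutset_hypergraph e) (~: S').
  by apply: contraT => /(CD_set_of_no_edge_compl eirr nS').
have := thr _ _ (subsetT _) (subsetT _) hS' (CD_set_no_edge_compl esym cdS).
by have := wsumC w S; have := wsumC w S'; lia.
Qed.

Lemma connected_domishold_of_wsum (w : V -> nat) : graph_connected e ->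
  (forall S S', CD_set e S -> ~ CD_set e S' -> wsum w S' < wsum w S) ->
  connected_domishold e.
Proof.
move=> conn sep; right.
pose CDb (S : {set V}) := [forall x, (x \notin S) ==> [exists y in S, e x y]] && connected_set e S.
have CDbP (S : {set V}) : reflect (CD_set e S) (CDb S).
  by apply: (iffP andP) => -[/dominatingP].
have cdT : CDb setT by apply/CDbP; split=> // x; rewrite inE.
case: (arg_minnP (wsum w) cdT) => S0 /CDbP cdS0 S0min.
exists (fun x => INR (w x)), (INR (wsum w S0)); split=> [x | ]; first exact: pos_INR.
split; first exact: pos_INR.
move=> S; rewrite weight_natE; split=> [/INR_le/leP le0 | /CDbP cdS]; last exact/le_INR/leP/S0min.
by apply/CDbP; apply: contraT => /CDbP /(sep _ _ cdS0); rewrite ltnNge le0.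
Qed.

Theorem one_Sperner_connected_domishold :
  one_Sperner (cutset_hypergraph e) -> connected_domishold e.
Proof.
move=> h1; have [conn | nconn] := boolP (connected_set e setT); last by left; apply/negP.
have [w thr] := one_Sperner_threshold h1 (fun E _ => subsetT E).
by apply: (connected_domishold_of_wsum (w := w) conn) => S S'; apply: CD_set_wsum_lt.
Qed.

Theorem connected_domishold_two_asummable :
  connected_domishold e -> two_asummable (cutset_hypergraph e).
Proof.
case=> [nconn | [w [t [_ [_ wt]]]]] [A1 [A2 [B1 [B2 [hA1 [hA2 [nB1 [nB2 count]]]]]]]].
  by apply: nB1; exists set0; [exact: set0_in_cutset_hypergraph | exact: sub0set].
have lt_A A : contains_hyperedge (cutset_hypergraph e) A -> Rlt (weight w (~: A)) t.
  move/has_edgeP => hA; apply: Rnot_le_lt => /wt/(CD_set_no_edge_compl esym).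
  by rewrite setCK hA.
have ge_B B : ~ contains_hyperedge (cutset_hypergraph e) B -> Rle t (weight w (~: B)).
  move=> nB; apply/wt/(CD_set_of_no_edge_compl eirr); last by rewrite setCK; apply/has_edgeP.
  apply/eqP => B0; apply: nB; case: hA1 => E HE _; exists E => //.
  by rewrite -(setCK B) B0 setC0 subsetT.
have := weight_count2 w (A1 := ~: A1) (A2 := ~: A2) (B1 := ~: B1) (B2 := ~: B2).
have count' v : (v \in ~: A1) + (v \in ~: A2) = (v \in ~: B1) + (v \in ~: B2).
  by have := count v; rewrite !inE; case: (v \in A1); case: (v \in A2); case: (v \in B1); case: (v \in B2).
move=> /(_ count'); have := lt_A _ hA1; have := lt_A _ hA2; have := ge_B _ nB1; have := ge_B _ nB2.
lra.
Qed.

End Domishold.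

Theorem mainTheorem2 (V : finType) (e : rel V) (He : simple_graph e) :
  (one_Sperner (cutset_hypergraph e) -> connected_domishold e) /\
  (connected_domishold e -> two_asummable (cutset_hypergraph e)).
Proof.
case: He => esym eirr; split.
- exact: one_Sperner_connected_domishold.
- exact: connected_domishold_two_asummable.
Qed.
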